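(* Let $X,Y,Z$ be random variables on finite alphabets $\mathcal{X},\mathcal{Y},\mathcal{Z}$. For each $y\in\mathcal{Y}$ with $\Pr(Y=y)>0$, let $(A_y,B_y,C_y)$ be the random triple on $\mathcal{X}\times\mathcal{Y}\times\mathcal{Z}$ with $$\Pr(A_y=x,B_y=y',C_y=z)=\begin{cases}0 & \text{if } \Pr(Z=z)=0,\\ \dfrac{\Pr(X=x,Y=y',Z=z)\,\Pr(Z=z\mid Y=y)}{\Pr(Z=z)} & \text{otherwise.}\end{cases}$$ Let $A_{Z|Y}$ be the random variable on $\mathcal{X}$ with $\Pr(A_{Z|Y}=x)=\sum_{y:\Pr(Y=y)>0}\Pr(Y=y)\Pr(A_y=x)$. Then $H(A_{Z|Y})=H(X)$.
   Context: $H$ denotes Shannon entropy. *)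

From mathcomp Require Import all_boot all_order all_algebra.
From mathcomp Require Import reals exp.
Set Implicit Arguments. Unset Strict Implicit. Unset Printing Implicit Defensive.
Import Order.TTheory GRing.Theory Num.Theory.
Local Open Scope ring_scope.

Section Defs.
Variable R : realType.

Definition is_pmf (T : finType) (p : T -> R) : Prop :=
  (forall t, 0 <= p t) /\ \sum_(t : T) p t = 1.

Definition entropy (T : finType) (p : T -> R) : R :=
  - \sum_(t : T | 0 < p t) p t * (ln (p t) / ln 2).

Variables (X Y Z : finType).
(* joint law of (X,Y,Z): P x y z = Pr(X=x, Y=y, Z=z) *)
Variable P : X * Y * Z -> R.

Definition PrX (x : X) : R := \sum_(y : Y) \sum_(z : Z) P (x, y, z).
Definition PrY (y : Y) : R := \sum_(x : X) \sum_(z : Z) P (x, y, z).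
Definition PrZ (z : Z) : R := \sum_(x : X) \sum_(y : Y) P (x, y, z).
Definition PrYZ (y : Y) (z : Z) : R := \sum_(x : X) P (x, y, z).
(* Pr(Z=z | Y=y), used only when Pr(Y=y) > 0 *)
Definition condZY (z : Z) (y : Y) : R := PrYZ y z / PrY y.

Definition lawABC (y : Y) (t : X * Y * Z) : R :=
  let: (x, y', z) := t in
  if PrZ z == 0 then 0 else P (x, y', z) * condZY z y / PrZ z.

Definition lawA (y : Y) (x : X) : R :=
  \sum_(y' : Y) \sum_(z : Z) lawABC y (x, y', z).

Definition lawAZY (x : X) : R :=
  \sum_(y : Y | 0 < PrY y) PrY y * lawA y x.

End Defs.

(* Mixing the laws of the A_y with the weights Pr(Y = y) undoes the
   conditioning: summing Pr(Z = z | Y = y) Pr(Y = y) over y gives back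
   Pr(Z = z), which cancels the denominator of the law of (A_y, B_y, C_y).
   Hence A_{Z|Y} has exactly the law of X, and in particular its entropy. *)
From mathcomp Require Import all_boot all_order all_algebra.
From mathcomp Require Import reals exp.
Import Order.TTheory GRing.Theory Num.Theory.
Local Open Scope ring_scope.

Lemma psumr2_eq0 (R : numDomainType) (A B : finType) (f : A -> B -> R) :
  (forall a b, 0 <= f a b) -> \sum_a \sum_b f a b = 0 -> forall a b, f a b = 0.
Proof.
move=> f_ge0 sum_eq0 a b.
have suma_eq0 : \sum_b f a b = 0.
  by move/psumr_eq0P: sum_eq0; apply=> // a' _; apply: sumr_ge0.
by move/psumr_eq0P: suma_eq0; apply.
Qed.

Lemma entropy_eq (R : realType) (T : finType) (p q : T -> R) :
  p =1 q -> entropy p = entropy q.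
Proof. by move=> epq; congr (- _); apply: eq_big => [t|t _]; rewrite epq. Qed.

Section Mixture.
Variables (R : realType) (X Y Z : finType) (P : X * Y * Z -> R).
Hypothesis P_ge0 : forall t, 0 <= P t.

Lemma PrY_ge0 y : 0 <= PrY P y.
Proof. by do 2 apply: sumr_ge0 => ? _. Qed.

Lemma PrZ_eq0 z : PrZ P z = 0 -> forall x y, P (x, y, z) = 0.
Proof. exact: psumr2_eq0. Qed.

Lemma PrY_eq0 y : PrY P y = 0 -> forall x z, P (x, y, z) = 0.
Proof. exact: psumr2_eq0. Qed.

Lemma sum_PrYZ z : \sum_y PrYZ P y z = PrZ P z.
Proof. by rewrite /PrYZ /PrZ exchange_big. Qed.

Definition mixture_term (x : X) (y y' : Y) (z : Z) : R :=
  if PrZ P z == 0 then 0 else P (x, y', z) * PrYZ P y z / PrZ P z.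

(* The restriction to Pr(Y = y) > 0 can be dropped: the extra terms vanish
   because Pr(Y = y) = 0 forces Pr(Y = y, Z = z) = 0. *)
Lemma lawAZY_expand x :
  lawAZY P x = \sum_y \sum_y' \sum_z mixture_term x y y' z.
Proof.
rewrite /lawAZY big_mkcond /=; apply: eq_bigr => y _.
case: ifPn => [PrY_gt0|]; last first.
  rewrite lt_neqAle PrY_ge0 andbT negbK eq_sym => /eqP/PrY_eq0 P0.
  apply/esym/big1 => y' _; apply: big1 => z _; rewrite /mixture_term.
  by case: ifP => // _; rewrite /PrYZ big1 ?mulr0 ?mul0r.
rewrite /lawA mulr_sumr; apply: eq_bigr => y' _.
rewrite mulr_sumr; apply: eq_bigr => z _ /=; rewrite /mixture_term /condZY.
case: ifP => _; first by rewrite mulr0.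
by rewrite mulrCA !mulrA divfK ?gt_eqF // mulrAC.
Qed.

Lemma lawAZY_PrX x : lawAZY P x = PrX P x.
Proof.
rewrite lawAZY_expand exchange_big /PrX; apply: eq_bigr => y' _.
rewrite exchange_big; apply: eq_bigr => z _; rewrite /mixture_term.
have [/PrZ_eq0 P0|PrZ_neq0] := eqVneq (PrZ P z) 0.
  by rewrite big1 ?P0.
by rewrite -mulr_suml -mulr_sumr sum_PrYZ mulfK.
Qed.

End Mixture.

Theorem lemma2 (R : realType) (X Y Z : finType) (P : X * Y * Z -> R)
  (hP : is_pmf P) :
  entropy (lawAZY P) = entropy (PrX P).
Proof. by case: hP => P_ge0 _; apply/entropy_eq/lawAZY_PrX. Qed.
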